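(* Let $V\colon\mathbf{ZZ}\to\mathbf{Vec}$ be an indecomposable zigzag persistence module. Then there exists an integer $t\geq 0$ such that for every even integer $i\ge t$ the map $f_i\colon V_i\to V_{i+1}$ is injective and the map $g_i\colon V_i\to V_{i-1}$ is surjective. Dually, there exists an integer $s\le 0$ such that for every even integer $i\le s$ the map $f_i$ is surjective and $g_i$ is injective.
   Context: Fix a field $\mathbb{F}$; $\mathbf{Vec}$ denotes the category of finite-dimensional $\mathbb{F}$-vector spaces. $\mathbf{ZZ}$ is the category whose objects are the integers, with non-identity morphisms $i\to i-1$ and $i\to i+1$ for every even integer $i$. A zigzag persistence module is a functor $V\colon\mathbf{ZZ}\to\mathbf{Vec}$, with $g_i=V(i\to i-1)\colon V_i\to V_{i-1}$ and $f_i=V(i\to i+1)\colon V_i\to V_{i+1}$ for even $i$. Direct sums are pointwise; $V$ is indecomposable if it is nonzero and there are no nonzero $U,W$ with $V\cong U\oplus W$. *)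

From HB Require Import structures.
From mathcomp Require Import all_boot all_order all_algebra.
Set Implicit Arguments. Unset Strict Implicit. Unset Printing Implicit Defensive.
Import Order.TTheory GRing.Theory Num.Theory.
Local Open Scope ring_scope.

(* V_i is represented as the coordinate space 'rV[F]_(zdim i);
   a linear map V_i -> V_j is a matrix acting on row vectors (v |-> v *m A).
   zf i represents f_i : V_i -> V_{i+1} and zg i represents g_i : V_i -> V_{i-1};
   they are only meaningful (and only ever used) for even i. *)
Record zzmod (F : fieldType) := ZZmod {
  zdim : int -> nat;
  zf : forall i : int, 'M[F]_(zdim i, zdim (i + 1));
  zg : forall i : int, 'M[F]_(zdim i, zdim (i - 1))
}.

Definition zeven (i : int) : bool := (2 %| i)%Z.

Definition zzmorph (F : fieldType) (V W : zzmod F)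
  (phi : forall i : int, 'M[F]_(zdim V i, zdim W i)) : Prop :=
  forall i : int, zeven i ->
    zf V i *m phi (i + 1) = phi i *m zf W i /\
    zg V i *m phi (i - 1) = phi i *m zg W i.

Definition zziso (F : fieldType) (V W : zzmod F) : Prop :=
  exists (phi : forall i : int, 'M[F]_(zdim V i, zdim W i))
         (psi : forall i : int, 'M[F]_(zdim W i, zdim V i)),
    [/\ zzmorph phi, zzmorph psi,
        forall i, phi i *m psi i = 1%:M &
        forall i, psi i *m phi i = 1%:M].

Definition zzsum (F : fieldType) (U W : zzmod F) : zzmod F :=
  @ZZmod F (fun i => (zdim U i + zdim W i)%N)
    (fun i => block_mx (zf U i) 0 0 (zf W i))
    (fun i => block_mx (zg U i) 0 0 (zg W i)).

Definition zznonzero (F : fieldType) (V : zzmod F) : Prop :=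
  exists i : int, zdim V i <> 0%N.

Definition zzindecomposable (F : fieldType) (V : zzmod F) : Prop :=
  zznonzero V /\
  ~ (exists U W : zzmod F, [/\ zznonzero U, zznonzero W & zziso V (zzsum U W)]).

Definition lin_injective (F : fieldType) m n (A : 'M[F]_(m, n)) : Prop :=
  injective (fun v : 'rV[F]_m => v *m A).
Definition lin_surjective (F : fieldType) m n (A : 'M[F]_(m, n)) : Prop :=
  forall w : 'rV[F]_n, exists v : 'rV[F]_m, v *m A = w.

From HB Require Import structures.
From mathcomp Require Import all_boot all_order all_algebra zify.
From Stdlib Require Import Classical ClassicalEpsilon.
Import Order.TTheory GRing.Theory Num.Theory.
Set Implicit Arguments. Unset Strict Implicit. Unset Printing Implicit Defensive.
Local Open Scope ring_scope.

(* If f_i is not injective (or g_i not surjective) for some even i, pick a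
   nonzero kernel vector of f_i (or a nonzero functional on V_(i-1) killing the
   image of g_i).  Reading V leftwards from there gives a zigzag of linear maps
   along a half-line, and the vector extends to a thread v_k of compatible
   vectors together with a thread u_k of compatible functionals on the dual
   zigzag, normalised so that v_k u_k^T = 1 or v_k = u_k = 0.  The vector
   either dies after finitely many steps, stops being extendable after finitely
   many steps, or extends forever without dying; in each case a functional
   separating it from the vectors dying one step earlier, from those extending
   one step further, or from those dying eventually starts the dual thread.  The
   rank-one maps u_k^T v_k, extended by 0, form a nonzero idempotent
   endomorphism of V vanishing to the right of i; by indecomposability it is
   the identity, so V_n = 0 for n > i and the maps there are trivially
   injective and surjective.  The left tail is symmetric. *)

Lemma row_base_fixedK (F : fieldType) m n (e : 'M[F]_n) (x : 'M[F]_(m, n)) :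
  x *m e = x -> x *m pinvmx (row_base e) *m row_base e = x.
Proof. by move=> xe; apply: mulmxKpV; rewrite eq_row_base -xe submxMl. Qed.

Section IdempotentRowBase.
Variables (F : fieldType) (n : nat) (e : 'M[F]_n).
Hypothesis e_idem : e *m e = e.

Lemma row_base_idem : row_base e *m e = row_base e.
Proof.
have : (row_base e <= e)%MS by rewrite eq_row_base.
by case/submxP=> D ->; rewrite -mulmxA e_idem.
Qed.

Lemma idem_compl : (1%:M - e) *m (1%:M - e) = 1%:M - e.
Proof. by rewrite mulmxBl mul1mx mulmxBr mulmx1 e_idem subrr subr0. Qed.

Lemma row_base_idem_compl : row_base e *m (1%:M - e) = 0.
Proof. by rewrite mulmxBr mulmx1 row_base_idem subrr. Qed.

Lemma row_base_compl_idem : row_base (1%:M - e) *m e = 0.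
Proof.
have : (row_base (1%:M - e) <= 1%:M - e)%MS by rewrite eq_row_base.
by case/submxP=> D ->; rewrite -mulmxA mulmxBl mul1mx e_idem subrr mulmx0.
Qed.

End IdempotentRowBase.

Section IdempotentIntertwiner.
Variables (F : fieldType) (na nb : nat) (ea : 'M[F]_na) (eb : 'M[F]_nb).
Variable M : 'M[F]_(na, nb).
Hypotheses (ea_idem : ea *m ea = ea) (M_ea_eb : M *m eb = ea *m M).

Local Notation Ba := (row_base ea).
Local Notation Bb := (row_base eb).

Lemma idem_proj_intertwine :
  M *m (eb *m pinvmx Bb) = (ea *m pinvmx Ba) *m (Ba *m M *m pinvmx Bb).
Proof.
have -> : ea *m pinvmx Ba *m (Ba *m M *m pinvmx Bb) = ea *m pinvmx Ba *m Ba *m M *m pinvmx Bb.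
  by rewrite !mulmxA.
by rewrite row_base_fixedK // -M_ea_eb mulmxA.
Qed.

Lemma idem_incl_intertwine : Ba *m M *m pinvmx Bb *m Bb = Ba *m M.
Proof.
by rewrite row_base_fixedK // -mulmxA M_ea_eb mulmxA row_base_idem.
Qed.

End IdempotentIntertwiner.

Section BlockIntertwiner.
Variables (F : fieldType) (m m' n1 n2 n1' n2' : nat) (M : 'M[F]_(m, m')).

Lemma row_mx_intertwine (A : 'M[F]_(n1, n1')) (B : 'M[F]_(n2, n2'))
    (P1 : 'M_(m, n1)) (P2 : 'M_(m, n2)) (Q1 : 'M_(m', n1')) (Q2 : 'M_(m', n2')) :
  M *m Q1 = P1 *m A -> M *m Q2 = P2 *m B ->
  M *m row_mx Q1 Q2 = row_mx P1 P2 *m block_mx A 0 0 B.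
Proof.
by move=> h1 h2; rewrite mul_mx_row mul_row_block !mulmx0 addr0 add0r h1 h2.
Qed.

Lemma col_mx_intertwine (A : 'M[F]_(n1, n1')) (B : 'M[F]_(n2, n2'))
    (P1 : 'M_(n1, m)) (P2 : 'M_(n2, m)) (Q1 : 'M_(n1', m')) (Q2 : 'M_(n2', m')) :
  A *m Q1 = P1 *m M -> B *m Q2 = P2 *m M ->
  block_mx A 0 0 B *m col_mx Q1 Q2 = col_mx P1 P2 *m M.
Proof.
by move=> h1 h2; rewrite mul_col_mx mul_block_col !mul0mx addr0 add0r h1 h2.
Qed.

End BlockIntertwiner.

Section IdempotentSplitting.
Variables (F : fieldType) (V : zzmod F) (e : forall i, 'M[F]_(zdim V i)).
Hypotheses (e_morph : zzmorph e) (e_idem : forall i, e i *m e i = e i).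

Definition image_zzmod (p : forall i, 'M[F]_(zdim V i)) : zzmod F :=
  @ZZmod F (fun i => \rank (p i))
    (fun i => row_base (p i) *m zf V i *m pinvmx (row_base (p (i + 1))))
    (fun i => row_base (p i) *m zg V i *m pinvmx (row_base (p (i - 1)))).

Let c i : 'M[F]_(zdim V i) := 1%:M - e i.

Lemma compl_morph : zzmorph c.
Proof.
move=> i ev; have [hf hg] := e_morph ev.
by rewrite /c !mulmxBr !mulmxBl !mulmx1 !mul1mx hf hg.
Qed.

Lemma zziso_idem_split : zziso V (zzsum (image_zzmod e) (image_zzmod c)).
Proof.
have c_idem i : c i *m c i = c i by exact: idem_compl.
exists (fun i => row_mx (e i *m pinvmx (row_base (e i))) (c i *m pinvmx (row_base (c i)))).
exists (fun i => col_mx (row_base (e i)) (row_base (c i))).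
split.
- move=> i ev; have [hf hg] := e_morph ev; have [hf' hg'] := compl_morph ev.
  by split; apply: row_mx_intertwine; apply: idem_proj_intertwine.
- move=> i ev; have [hf hg] := e_morph ev; have [hf' hg'] := compl_morph ev.
  by split; apply: col_mx_intertwine; apply: idem_incl_intertwine.
- by move=> i; rewrite mul_row_col !row_base_fixedK // /c addrC subrK.
- move=> i; rewrite mul_col_row !(mulmxA (row_base _) _ (pinvmx _)) /c.
  rewrite row_base_idem_compl // row_base_compl_idem // !mul0mx.
  by rewrite !row_base_idem ?idem_compl // !mulmxVp ?row_base_free // -scalar_mx_block.
Qed.

Lemma image_zzmod_nonzero p : (exists i, p i != 0) -> zznonzero (image_zzmod p).
Proof. by case=> i pi0; exists i => /eqP; rewrite mxrank_eq0 (negbTE pi0). Qed.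

Lemma zzindecomposable_idem :
  zzindecomposable V -> (forall i, e i = 0) \/ (forall i, e i = 1%:M).
Proof.
case=> _ nodec; case: (classic (exists i, e i != 0)) => [nz|z]; [right | left] => i.
- apply/eqP; rewrite eq_sym -subr_eq0; apply: contraT => ci; case: nodec.
  exists (image_zzmod e), (image_zzmod c).
  split; [exact: image_zzmod_nonzero | | exact: zziso_idem_split].
  by apply: image_zzmod_nonzero; exists i.
- by apply/eqP; apply: contraT => ei; case: z; exists i.
Qed.

Lemma zzindecomposable_idem_support (P : int -> Prop) b :
  zzindecomposable V -> e b != 0 -> (forall n, P n -> e n = 0) ->
  forall n, P n -> zdim V n = 0%N.
Proof.
move=> hV eb0 eP n Pn; case: (zzindecomposable_idem hV) => [e0|e1].
  by rewrite e0 eqxx in eb0.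
by rewrite -(mxrank1 F (zdim V n)) -e1 eP // mxrank0.
Qed.

End IdempotentSplitting.

Lemma nat_fun_argmin (g : nat -> nat) : exists m0, forall m, (g m0 <= g m)%N.
Proof.
suff argmin_below b m : (g m <= b)%N -> exists m0, forall m', (g m0 <= g m')%N.
  exact: (argmin_below _ 0%N (leqnn _)).
elim: b m => [|b IH] m gm.
  by exists m => m'; rewrite (leq_trans gm).
case: (classic (exists m', (g m' < g m)%N)) => [[m' lt]|nolt].
  by apply: (IH m'); rewrite -ltnS (leq_trans lt gm).
by exists m => m'; rewrite leqNgt; apply/negP => lt; apply: nolt; exists m'.
Qed.

Section SubspaceOps.
Variable F : fieldType.

Lemma mxchain_stable n (A : nat -> 'M[F]_n) :
  (forall m, (A m.+1 <= A m)%MS) -> exists m0, forall m, (A m0 <= A m)%MS.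
Proof.
move=> decr; have A_anti : {homo A : i j / (i <= j)%N >-> (j <= i)%MS}.
  by apply: homo_leq => [B|B C D CB DC|//]; [exact: submx_refl | exact: submx_trans DC CB].
have [m0 min0] := nat_fun_argmin (fun m => \rank (A m)).
exists m0 => m; case: (leqP m0 m) => [le|/ltnW lt]; last exact: A_anti.
have /mxrank_leqif_sup[_ <-] := A_anti _ _ le.
by rewrite eqn_leq min0 mxrankS ?A_anti.
Qed.

Definition preimmx m n p (M : 'M[F]_(m, n)) (B : 'M[F]_(p, n)) : 'M[F]_m :=
  kermx (M *m cokermx B).

Lemma sub_preimmx q m n p (M : 'M[F]_(m, n)) (B : 'M[F]_(p, n)) (y : 'M_(q, m)) :
  (y <= preimmx M B)%MS = (y *m M <= B)%MS.
Proof. by rewrite sub_kermx mulmxA -submxE. Qed.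

Definition annmx m n (A : 'M[F]_(m, n)) : 'M[F]_n := kermx A^T.

Lemma sub_annmx q m n (A : 'M[F]_(m, n)) (y : 'M_(q, n)) :
  (y <= annmx A)%MS = (y *m A^T == 0).
Proof. exact: sub_kermx. Qed.

Lemma annmxS m1 m2 n (A : 'M[F]_(m1, n)) (B : 'M[F]_(m2, n)) :
  (A <= B)%MS -> (annmx B <= annmx A)%MS.
Proof.
case/submxP=> D ->; rewrite sub_annmx trmx_mul mulmxA.
have /eqP -> : annmx B *m B^T == 0 by rewrite -sub_annmx submx_refl.
by rewrite mul0mx.
Qed.

Lemma eqmx_annmx m1 m2 n (A : 'M[F]_(m1, n)) (B : 'M[F]_(m2, n)) :
  (A :=: B)%MS -> (annmx A :=: annmx B)%MS.
Proof. by move=> eqAB; apply/eqmxP; rewrite !annmxS ?eqAB. Qed.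

Lemma annmxK m n (A : 'M[F]_(m, n)) : (annmx (annmx A) :=: A)%MS.
Proof.
have sA : (A <= annmx (annmx A))%MS.
  rewrite sub_annmx -(inj_eq (@trmx_inj _ _ _)) trmx_mul trmxK trmx0.
  by rewrite -sub_annmx submx_refl.
apply/eqmx_sym/eqmxP; rewrite -(mxrank_leqif_eq sA).
by rewrite /annmx mxrank_ker mxrank_tr mxrank_ker mxrank_tr subKn ?rank_leq_col.
Qed.

Lemma annmx0 n : (annmx (0 : 'M[F]_n) :=: 1%:M)%MS.
Proof. by apply/eqmxP/rV_eqP => y; rewrite sub_annmx trmx0 mulmx0 eqxx submx1. Qed.

Lemma annmx1 n : (annmx (1%:M : 'M[F]_n) :=: (0 : 'M[F]_n))%MS.
Proof. by apply/eqmxP/rV_eqP => y; rewrite sub_annmx trmx1 mulmx1 submx0. Qed.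

Lemma separating_functional n m (S : 'M[F]_(m, n)) (x : 'rV[F]_n) :
  ~~ (x <= S)%MS -> exists2 y : 'rV[F]_n, (y <= annmx S)%MS & x *m y^T = 1%:M.
Proof.
move=> xS; have nz : x *m (annmx S)^T != 0 by rewrite -sub_annmx annmxK.
case: (pickP (fun j => x *m (row j (annmx S))^T != 0)) => [j nzj|all0]; last first.
  case/eqP: nz; apply: trmx_inj; rewrite trmx_mul trmxK trmx0.
  apply/row_matrixP => k; rewrite row_mul row0.
  by move/negbFE/eqP/(congr1 trmx): (all0 k); rewrite trmx_mul trmxK trmx0.
set r := row j (annmx S) in nzj *; have [c xr] : exists c, x *m r^T = c%:M.
  by exists ((x *m r^T) ord0 ord0); exact: mx11_scalar.
have c0 : c != 0 by apply: contraNneq nzj; rewrite xr => ->; rewrite raddf0.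
exists (c^-1 *: r); first by rewrite scalemx_sub ?row_sub.
by rewrite linearZ /= -scalemxAr xr scale_scalar_mx mulVf.
Qed.

Lemma pairing_sym n (x y : 'rV[F]_n) : x *m y^T = 1%:M -> y *m x^T = 1%:M.
Proof. by move/(congr1 trmx); rewrite trmx_mul trmxK trmx1. Qed.

End SubspaceOps.

Lemma dependent_choice (T : nat -> Type) (P : forall k, T k -> Prop)
    (R : forall k, T k -> T k.+1 -> Prop) (x : T 0%N) :
  P 0%N x -> (forall k y, P k y -> exists2 z, P k.+1 z & R k y z) ->
  exists w : forall k, T k, w 0%N = x /\ forall k, P k (w k) /\ R k (w k) (w k.+1).
Proof.
move=> P0 step.
have next k (y : {y : T k | P k y}) : {z : T k.+1 | P k.+1 z /\ R k (sval y) z}.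
  apply: constructive_indefinite_description.
  by have [z Pz Rz] := step k _ (svalP y); exists z.
pose fix w k : {y : T k | P k y} :=
  match k return {y : T k | P k y} with
  | 0 => exist _ x P0
  | k'.+1 => exist _ (sval (next k' (w k'))) (svalP (next k' (w k'))).1
  end.
exists (fun k => sval (w k)); split=> // k.
by split; [exact: svalP | exact: (svalP (next k (w k))).2].
Qed.

Section HalfLine.
Variables (F : fieldType) (d : nat -> nat).

(* A zigzag on the half-line 0 - 1 - 2 - ...: arrow k points forward (inl) or
   backward (inr); as in [zzmod], matrices act on row vectors. *)
Definition arrows := forall k, ('M[F]_(d k, d k.+1) + 'M[F]_(d k.+1, d k))%type.

Section Pull.
Variable a : arrows.

Local Unset Implicit Arguments.

Definition linked k (x : 'rV[F]_(d k)) (y : 'rV[F]_(d k.+1)) : Prop :=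
  match a k with inl M => x *m M = y | inr M => y *m M = x end.

Definition intertwines k (P : 'M[F]_(d k)) (Q : 'M[F]_(d k.+1)) : Prop :=
  match a k with inl M => M *m Q = P *m M | inr M => M *m P = Q *m M end.

Definition pull k (B : 'M[F]_(d k.+1)) : 'M[F]_(d k) :=
  match a k with inl M => preimmx M B | inr M => <<B *m M>>%MS end.

Fixpoint pull_iter (base : forall k, 'M[F]_(d k)) m : forall k, 'M[F]_(d k) :=
  if m is m'.+1 then fun k => pull k (pull_iter base m' k.+1) else base.

(* [extendable m k]: vectors at k starting a linked path of length m;
   [vanishing m k]: those starting one that ends at 0. *)
Definition extendable := pull_iter (fun k => 1%:M).
Definition vanishing := pull_iter (fun k => 0).

Definition lasting k (x : 'rV[F]_(d k)) := forall m, (x <= extendable m k)%MS.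

Local Set Implicit Arguments.

Lemma linked0 k : linked k 0 0.
Proof. by rewrite /linked; case: (a k) => M; rewrite mul0mx. Qed.

Lemma pullP k B x : (x <= pull k B)%MS <-> exists2 y, (y <= B)%MS & linked k x y.
Proof.
rewrite /pull /linked; case: (a k) => M; split.
- by rewrite sub_preimmx => xMB; exists (x *m M).
- by case=> y yB xy; rewrite sub_preimmx xy.
- by rewrite genmxE => /submxP[D ->]; exists (D *m B); rewrite ?submxMl ?mulmxA.
- by case=> y yB <-; rewrite genmxE submxMr.
Qed.

Lemma pull_mono k B B' : (B <= B')%MS -> (pull k B <= pull k B')%MS.
Proof.
move=> sBB'; apply/rV_subP => x /pullP[y yB xy].
by apply/pullP; exists y => //; apply: submx_trans sBB'.
Qed.

Lemma pull_eqmx k B B' : (B :=: B')%MS -> (pull k B :=: pull k B')%MS.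
Proof. by move=> eqB; apply/eqmxP; rewrite !pull_mono // eqB. Qed.

Lemma pull_iter_eqmx base base' : (forall k, (base k :=: base' k)%MS) ->
  forall m k, (pull_iter base m k :=: pull_iter base' m k)%MS.
Proof. by move=> eqb; elim=> [|m IH] k //=; apply: pull_eqmx. Qed.

Lemma pull_iter_step base m k y : (k < m)%N ->
  (y <= pull_iter base (m - k) k)%MS ->
  exists2 z, (z <= pull_iter base (m - k.+1) k.+1)%MS & linked k y z.
Proof. by move=> ltkm; rewrite -(subnSK ltkm) => /pullP. Qed.

Lemma extendableS m k : (extendable m.+1 k <= extendable m k)%MS.
Proof. by elim: m k => [|m IH] k; [exact: submx1 | exact: pull_mono]. Qed.

Lemma vanishingS m k : (vanishing m k <= vanishing m.+1 k)%MS.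
Proof. by elim: m k => [|m IH] k; [exact: sub0mx | exact: pull_mono]. Qed.

Lemma extendable_stable k : exists m0, forall m, (extendable m0 k <= extendable m k)%MS.
Proof. exact: mxchain_stable (extendableS^~ k). Qed.

Lemma vanishing_stable k : exists m0, forall m, (vanishing m k <= vanishing m0 k)%MS.
Proof.
have [m0 min0] := @mxchain_stable _ _ (fun m => annmx (vanishing m k))
  (fun m => annmxS (vanishingS m k)).
exists m0 => m; rewrite -(annmxK (vanishing m k)) -(annmxK (vanishing m0 k)).
exact: annmxS.
Qed.

Lemma vanishing_step m k y : (y <= vanishing (m - k) k)%MS ->
  exists2 z, (z <= vanishing (m - k.+1) k.+1)%MS & linked k y z.
Proof.
case: (ltnP k m) => [ltkm|lemk]; first exact: pull_iter_step.
have [mk0 mk1] : (m - k = 0 /\ m - k.+1 = 0)%N by split; lia.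
rewrite mk0 mk1 /vanishing /= submx0 => /eqP ->.
by exists 0; [exact: sub0mx | exact: linked0].
Qed.

Lemma vanishing_gone m k (y : 'rV[F]_(d k)) :
  (m <= k)%N -> (y <= vanishing (m - k) k)%MS -> y = 0.
Proof.
move=> lemk; have -> : (m - k = 0)%N by lia.
by rewrite /vanishing /= submx0 => /eqP.
Qed.

Lemma lasting_step k x : lasting k x -> exists2 y, lasting k.+1 y & linked k x y.
Proof.
move=> xl; have [m0 min0] := extendable_stable k.+1.
have /pullP[y y_ext xy] := xl m0.+1.
by exists y => // m; apply: submx_trans (min0 m).
Qed.

End Pull.

Local Unset Implicit Arguments.
Definition dual_arrows (a : arrows) : arrows :=
  fun k => match a k with inl M => inr M^T | inr M => inl M^T end.

Definition thread_mx (v u : forall k, 'rV[F]_(d k)) k : 'M[F]_(d k) := (u k)^T *m v k.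

Definition idem_thread (a : arrows) (v u : forall k, 'rV[F]_(d k)) :=
  forall k, (v k *m (u k)^T = 1%:M \/ (v k = 0 /\ u k = 0)) /\
            intertwines a k (thread_mx v u k) (thread_mx v u k.+1).

Local Set Implicit Arguments.

Lemma thread_mx_idem v u k : v k *m (u k)^T = 1%:M \/ (v k = 0 /\ u k = 0) ->
  thread_mx v u k *m thread_mx v u k = thread_mx v u k.
Proof.
rewrite /thread_mx; case=> [vu|[-> ->]]; last by rewrite trmx0 !mul0mx.
by rewrite mulmxA -(mulmxA _ (v k)) vu mulmx1.
Qed.

Lemma thread_mx_neq0 v u k : v k *m (u k)^T = 1%:M -> thread_mx v u k != 0.
Proof.
move=> vu; apply/eqP => /(congr1 (fun M => v k *m M *m (u k)^T)).
by rewrite /thread_mx !mulmxA vu mul1mx vu mulmx0 mul0mx; apply/eqP/oner_neq0.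
Qed.

Lemma idem_thread_dual a v u : idem_thread (dual_arrows a) v u -> idem_thread a u v.
Proof.
move=> th k; have [vu tw] := th k; split.
  by case: vu => [/pairing_sym|[-> ->]]; [left | right].
move: tw; rewrite /intertwines /thread_mx /dual_arrows.
by case: (a k) => M /(congr1 trmx); rewrite !trmx_mul !trmxK !mulmxA => ->.
Qed.

Section Duality.
Variable a : arrows.
Local Notation a' := (dual_arrows a).

Lemma pull_dual k (B : 'M[F]_(d k.+1)) : (pull a' k (annmx B) :=: annmx (pull a k B))%MS.
Proof.
rewrite /pull /dual_arrows; case: (a k) => M /=.
- apply: eqmx_trans (genmxE _) _; apply: eqmx_trans (eqmx_sym (annmxK _)) _.
  apply: eqmx_annmx; apply/eqmxP/rV_eqP => y.
  by rewrite sub_annmx trmx_mul trmxK mulmxA -sub_annmx annmxK sub_preimmx.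
- apply/eqmxP/rV_eqP => y; rewrite (eqmx_annmx (genmxE _)).
  by rewrite sub_preimmx !sub_annmx -mulmxA -trmx_mul.
Qed.

Lemma pull_iter_dual base m k :
  (pull_iter a' (fun j => annmx (base j)) m k :=: annmx (pull_iter a base m k))%MS.
Proof.
elim: m k => [|m IH] k //=.
by apply: (eqmx_trans _ (pull_dual _)); apply: pull_eqmx.
Qed.

Lemma extendable_dual m k : (extendable a' m k :=: annmx (vanishing a m k))%MS.
Proof.
apply: (eqmx_trans _ (pull_iter_dual _ m k)).
by apply: pull_iter_eqmx => j; apply/eqmx_sym/annmx0.
Qed.

Lemma vanishing_dual m k : (vanishing a' m k :=: annmx (extendable a m k))%MS.
Proof.
apply: (eqmx_trans _ (pull_iter_dual _ m k)).
by apply: pull_iter_eqmx => j; apply/eqmx_sym/annmx1.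
Qed.

Lemma linked_pairing k x x' y y' : linked a k x x' -> linked a' k y y' ->
  x *m y^T = x' *m y'^T.
Proof.
rewrite /linked /dual_arrows; case: (a k) => M <- <-;
by rewrite trmx_mul trmxK mulmxA.
Qed.

Lemma linked_intertwines k x x' y y' : linked a k x x' -> linked a' k y y' ->
  intertwines a k (y^T *m x) (y'^T *m x').
Proof.
rewrite /linked /intertwines /dual_arrows; case: (a k) => M <- <-;
by rewrite trmx_mul trmxK !mulmxA.
Qed.

Lemma intertwines_linked0 k x y : linked a k x 0 -> intertwines a k (y^T *m x) 0.
Proof.
rewrite /linked /intertwines; case: (a k) => M; last by move <-; rewrite !(mulmx0, mul0mx).
by move=> xM; rewrite -mulmxA xM !mulmx0.
Qed.

Lemma linked_pairing_const v u m :
  (forall k, (k < m)%N -> linked a k (v k) (v k.+1) /\ linked a' k (u k) (u k.+1)) ->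
  forall k, (k <= m)%N -> v k *m (u k)^T = v 0%N *m (u 0%N)^T.
Proof.
move=> lnk; elim=> [//|k IH] ltkm; have [lv lu] := lnk k ltkm.
by rewrite -(linked_pairing lv lu) IH // ltnW.
Qed.

Lemma vanishing_thread m x y : (x <= vanishing a m.+1 0)%MS ->
  (y <= annmx (vanishing a m 0))%MS -> x *m y^T = 1%:M ->
  exists v u, [/\ v 0%N = x, u 0%N = y & idem_thread a v u].
Proof.
move=> xv yv xy.
have x0 : (x <= vanishing a (m.+1 - 0) 0)%MS by rewrite subn0.
have [v [v0 vP]] := @dependent_choice _ (fun k z => z <= vanishing a (m.+1 - k) k)%MS
  (linked a) x x0 (@vanishing_step a m.+1).
pose Pu k (z : 'rV_(d k)) := (k <= m)%N -> (z <= extendable a' (m - k) k)%MS.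
have y0 : Pu 0%N y by rewrite /Pu subn0 extendable_dual.
have u_step k z : Pu k z -> exists2 z', Pu k.+1 z' & (k < m)%N -> linked a' k z z'.
  move=> zP; case: (ltnP k m) => [ltkm|lemk].
    by have [z' z'P zz'] := pull_iter_step ltkm (zP (ltnW ltkm)); exists z'.
  by exists 0 => //; rewrite /Pu ltnNge lemk.
have [u [u0 uP]] := dependent_choice y0 u_step.
have v_gone k : (m < k)%N -> v k = 0 by move=> ltmk; exact: vanishing_gone ltmk (vP k).1.
have vu1 k : (k <= m)%N -> v k *m (u k)^T = 1%:M.
  move=> lekm; rewrite (@linked_pairing_const v u m) ?v0 ?u0 // => j ltjm.
  by split; [exact: (vP j).2 | exact: (uP j).2 ltjm].
(* The dual thread is only needed up to m: from m + 1 on, v is 0 and u is cut to 0. *)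
exists v, (fun k => if (k <= m)%N then u k else 0); split => // k; rewrite /thread_mx.
split; first by case: leqP => [lekm|ltmk]; [left; exact: vu1 | right; rewrite v_gone].
case: (ltnP k m) => [ltkm|lemk].
  rewrite ltnW //; exact: linked_intertwines (vP k).2 ((uP k).2 ltkm).
rewrite trmx0 mul0mx; apply: intertwines_linked0.
by rewrite -(v_gone k.+1) ?ltnS //; exact: (vP k).2.
Qed.

Lemma lasting_thread x y : lasting a 0 x ->
  (forall m, (y <= annmx (vanishing a m 0))%MS) -> x *m y^T = 1%:M ->
  exists v u, [/\ v 0%N = x, u 0%N = y & idem_thread a v u].
Proof.
move=> xl yv xy; have yl : lasting a' 0 y by move=> m; rewrite extendable_dual.
have [v [v0 vP]] := dependent_choice xl (@lasting_step a).
have [u [u0 uP]] := dependent_choice yl (@lasting_step a').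
exists v, u; split => // k; split; last exact: linked_intertwines (vP k).2 (uP k).2.
left; rewrite (@linked_pairing_const v u k) ?v0 ?u0 // => j _.
by split; [exact: (vP j).2 | exact: (uP j).2].
Qed.

End Duality.

Lemma idem_thread_through a x : x != 0 ->
  exists v u, [/\ v 0%N = x, v 0%N *m (u 0%N)^T = 1%:M & idem_thread a v u].
Proof.
move=> x0; case: (classic (exists m, (x <= vanishing a m 0)%MS)) => [xv|xnv].
  have [m xm minm] := ex_minnP xv.
  case: m xm minm => [|m] xm minm; first by rewrite /vanishing /= submx0 (negbTE x0) in xm.
  have /separating_functional[y yv xy] : ~~ (x <= vanishing a m 0)%MS.
    by apply/negP => /minm; rewrite ltnn.
  have [v [u [v0 u0 th]]] := vanishing_thread xm yv xy.
  by exists v, u; rewrite v0 u0.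
case: (classic (exists m, ~~ (x <= extendable a m 0)%MS)) => [xe|xl].
  have [m xm minm] := ex_minnP xe.
  case: m xm minm => [|m] xm minm; first by rewrite /extendable /= submx1 in xm.
  (* Dually to the first case, the separating functional dies in the dual zigzag. *)
  have [y ye xy] := separating_functional xm.
  have yv : (y <= vanishing (dual_arrows a) m.+1 0)%MS by rewrite vanishing_dual.
  have xv : (x <= annmx (vanishing (dual_arrows a) m 0))%MS.
    rewrite (eqmx_annmx (vanishing_dual a m 0)) annmxK.
    by apply: contraT => /minm; rewrite ltnn.
  have [u [v [u0 v0 th]]] := vanishing_thread yv xv (pairing_sym xy).
  by exists v, u; split; rewrite ?v0 ?u0 //; exact: idem_thread_dual.
have [m0 min0] := vanishing_stable a 0.
have /separating_functional[y yv xy] : ~~ (x <= vanishing a m0 0)%MS.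
  by apply/negP => xm0; apply: xnv; exists m0.
have xl' : lasting a 0 x by move=> m; apply: contraT => xm; case: xl; exists m.
have [v [u [v0 u0 th]]] := lasting_thread xl' (fun m => submx_trans yv (annmxS (min0 m))) xy.
by exists v, u; rewrite v0 u0.
Qed.

Lemma idem_thread_through_dual a y : y != 0 ->
  exists v u, [/\ u 0%N = y, v 0%N *m (u 0%N)^T = 1%:M & idem_thread a v u].
Proof.
move=> y0; have [u [v [u0 uv th]]] := idem_thread_through (dual_arrows a) y0.
by exists v, u; split; [| exact: pairing_sym | exact: idem_thread_dual].
Qed.

End HalfLine.

Arguments thread_mx {F d}.
Arguments idem_thread {F d}.

Lemma zeven_subr1 n : zeven (n - 1) = ~~ zeven n.
Proof. by apply/idP/idP; rewrite /zeven; lia. Qed.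

Lemma zeven_addr1 n : zeven (n + 1) = ~~ zeven n.
Proof. by apply/idP/idP; rewrite /zeven; lia. Qed.

Lemma castmx_intertwine (F : fieldType) m n n' (h : n = n') (Z : 'M[F]_(m, n))
    (P : 'M[F]_m) (Q : 'M[F]_n') :
  castmx (erefl, h) Z *m Q = P *m castmx (erefl, h) Z -> Z *m conform_mx 0 Q = P *m Z.
Proof. by case: n' / h Q => Q; rewrite castmx_id conform_mx_id. Qed.

Section RightTail.
Variables (F : fieldType) (V : zzmod F) (b : int).

(* An iteration, so that [rpos k.+1] is [rpos k - 1] by conversion. *)
Definition rpos k : int := iter k (fun n => n - 1) b.

Lemma rposE k : rpos k = b - k%:Z.
Proof. by elim: k => [|k IH]; rewrite ?subr0 // /rpos iterS -/(rpos k) IH; lia. Qed.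

Lemma rpos_le k : rpos k <= b.
Proof. by rewrite rposE; lia. Qed.

Lemma rpos_dist k : `|b - rpos k|%N = k.
Proof. by rewrite rposE; lia. Qed.

Lemma rpos_onto n : n <= b -> exists k, n = rpos k.
Proof. by exists `|b - n|%N; rewrite rposE; lia. Qed.

Definition rdim k := zdim V (rpos k).

Definition rarrows : arrows F rdim := fun k =>
  if zeven (rpos k) then inl (zg V (rpos k))
  else inr (castmx (erefl, congr1 (zdim V) (subrK 1 (rpos k))) (zf V (rpos k - 1))).

Variables v u : forall k, 'rV[F]_(rdim k).
Hypothesis th : idem_thread rarrows v u.

Definition rtail_idem n : 'M[F]_(zdim V n) :=
  if n <= b then conform_mx 0 (thread_mx v u `|b - n|%N) else 0.
Local Notation e := rtail_idem.

Lemma rtail_idem_rpos k : e (rpos k) = thread_mx v u k.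
Proof. by rewrite /e rpos_le rpos_dist conform_mx_id. Qed.

Lemma rtail_idem_eq n k : n = rpos k -> e n = conform_mx 0 (thread_mx v u k).
Proof. by move->; rewrite rtail_idem_rpos conform_mx_id. Qed.

Lemma rtail_idem_out n : b < n -> e n = 0.
Proof. by rewrite /e ltNge => /negbTE ->. Qed.

Lemma rtail_idem_idem n : e n *m e n = e n.
Proof.
case: (lerP n b) => [/rpos_onto[k nk]|/rtail_idem_out ->]; last by rewrite mulmx0.
by subst n; rewrite rtail_idem_rpos thread_mx_idem //; exact: (th k).1.
Qed.

(* The thread supplies every commuting square except the one crossing b. *)
Lemma rtail_idem_morph :
  (zeven b -> e b *m zf V b = 0) ->
  (forall c, zeven c -> c - 1 = b -> zg V c *m e (c - 1) = 0) -> zzmorph e.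
Proof.
move=> hb_even hb_odd n ev; case: (lerP n b) => [lenb|ltbn]; last first.
  have ltbn1 : b < n + 1 by lia.
  rewrite (rtail_idem_out ltbn) (rtail_idem_out ltbn1) !mul0mx mulmx0; split=> //.
  case: (lerP (n - 1) b) => [len1b|/rtail_idem_out ->]; last by rewrite mulmx0.
  by apply: hb_odd => //; lia.
have [k nk] := rpos_onto lenb; subst n; clear lenb.
split; last first.
  have := (th k).2; rewrite /intertwines /rarrows ev.
  by rewrite -[rpos k - 1]/(rpos k.+1) !rtail_idem_rpos.
case: k ev => [|k] ev.
  change (rpos 0%N) with b in ev |- *.
  by rewrite rtail_idem_out ?mulmx0 ?hb_even //; lia.
have odd_k : zeven (rpos k) = false.
  by move: ev; rewrite -[rpos k.+1]/(rpos k - 1) zeven_subr1 => /negbTE.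
have := (th k).2; rewrite /intertwines /rarrows odd_k rtail_idem_rpos.
by move/castmx_intertwine; rewrite (rtail_idem_eq (subrK 1 (rpos k))).
Qed.

Lemma rtail_vanish : zzindecomposable V -> v 0%N *m (u 0%N)^T = 1%:M ->
  (zeven b -> e b *m zf V b = 0) ->
  (forall c, zeven c -> c - 1 = b -> zg V c *m e (c - 1) = 0) ->
  forall n, b < n -> zdim V n = 0%N.
Proof.
move=> hV vu hb_even hb_odd.
have e_morph := rtail_idem_morph hb_even hb_odd.
apply: (zzindecomposable_idem_support e_morph rtail_idem_idem (b := b) hV).
  by rewrite (rtail_idem_rpos 0) thread_mx_neq0.
exact: rtail_idem_out.
Qed.

End RightTail.

Section LeftTail.
Variables (F : fieldType) (V : zzmod F) (b : int).

Definition lpos k : int := iter k (fun n => n + 1) b.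

Lemma lposE k : lpos k = b + k%:Z.
Proof. by elim: k => [|k IH]; rewrite ?addr0 // /lpos iterS -/(lpos k) IH; lia. Qed.

Lemma lpos_ge k : b <= lpos k.
Proof. by rewrite lposE; lia. Qed.

Lemma lpos_dist k : `|lpos k - b|%N = k.
Proof. by rewrite lposE; lia. Qed.

Lemma lpos_onto n : b <= n -> exists k, n = lpos k.
Proof. by exists `|n - b|%N; rewrite lposE; lia. Qed.

Definition ldim k := zdim V (lpos k).

Definition larrows : arrows F ldim := fun k =>
  if zeven (lpos k) then inl (zf V (lpos k))
  else inr (castmx (erefl, congr1 (zdim V) (addrK 1 (lpos k))) (zg V (lpos k + 1))).

Variables v u : forall k, 'rV[F]_(ldim k).
Hypothesis th : idem_thread larrows v u.

Definition ltail_idem n : 'M[F]_(zdim V n) :=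
  if b <= n then conform_mx 0 (thread_mx v u `|n - b|%N) else 0.
Local Notation e := ltail_idem.

Lemma ltail_idem_lpos k : e (lpos k) = thread_mx v u k.
Proof. by rewrite /e lpos_ge lpos_dist conform_mx_id. Qed.

Lemma ltail_idem_eq n k : n = lpos k -> e n = conform_mx 0 (thread_mx v u k).
Proof. by move->; rewrite ltail_idem_lpos conform_mx_id. Qed.

Lemma ltail_idem_out n : n < b -> e n = 0.
Proof. by rewrite /e ltNge => /negbTE ->. Qed.

Lemma ltail_idem_idem n : e n *m e n = e n.
Proof.
case: (lerP b n) => [/lpos_onto[k nk]|/ltail_idem_out ->]; last by rewrite mulmx0.
by subst n; rewrite ltail_idem_lpos thread_mx_idem //; exact: (th k).1.
Qed.

Lemma ltail_idem_morph :
  (zeven b -> e b *m zg V b = 0) ->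
  (forall c, zeven c -> c + 1 = b -> zf V c *m e (c + 1) = 0) -> zzmorph e.
Proof.
move=> hb_even hb_odd n ev; case: (lerP b n) => [lebn|ltnb]; last first.
  have ltn1b : n - 1 < b by lia.
  rewrite (ltail_idem_out ltnb) (ltail_idem_out ltn1b) !mul0mx mulmx0; split=> //.
  case: (lerP b (n + 1)) => [len1b|/ltail_idem_out ->]; last by rewrite mulmx0.
  by apply: hb_odd => //; lia.
have [k nk] := lpos_onto lebn; subst n; clear lebn.
split.
  have := (th k).2; rewrite /intertwines /larrows ev.
  by rewrite -[lpos k + 1]/(lpos k.+1) !ltail_idem_lpos.
case: k ev => [|k] ev.
  change (lpos 0%N) with b in ev |- *.
  by rewrite ltail_idem_out ?mulmx0 ?hb_even //; lia.
have odd_k : zeven (lpos k) = false.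
  by move: ev; rewrite -[lpos k.+1]/(lpos k + 1) zeven_addr1 => /negbTE.
have := (th k).2; rewrite /intertwines /larrows odd_k ltail_idem_lpos.
by move/castmx_intertwine; rewrite (ltail_idem_eq (addrK 1 (lpos k))).
Qed.

Lemma ltail_vanish : zzindecomposable V -> v 0%N *m (u 0%N)^T = 1%:M ->
  (zeven b -> e b *m zg V b = 0) ->
  (forall c, zeven c -> c + 1 = b -> zf V c *m e (c + 1) = 0) ->
  forall n, n < b -> zdim V n = 0%N.
Proof.
move=> hV vu hb_even hb_odd.
have e_morph := ltail_idem_morph hb_even hb_odd.
apply: (zzindecomposable_idem_support e_morph ltail_idem_idem (b := b) hV).
  by rewrite (ltail_idem_lpos 0) thread_mx_neq0.
exact: ltail_idem_out.
Qed.

End LeftTail.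

Section LinearMaps.
Variable F : fieldType.

Lemma lin_injectivePn m n (A : 'M[F]_(m, n)) :
  ~ lin_injective A -> exists2 x : 'rV[F]_m, x != 0 & x *m A = 0.
Proof.
move=> ninj; apply: NNPP => nox; apply: ninj => x1 x2 eqA.
apply/eqP; rewrite -subr_eq0; apply: contraT => nz; case: nox.
by exists (x1 - x2); rewrite // mulmxBl eqA subrr.
Qed.

Lemma lin_surjectivePn m n (A : 'M[F]_(m, n)) :
  ~ lin_surjective A -> exists2 l : 'rV[F]_n, l != 0 & A *m l^T = 0.
Proof.
move=> nsurj; have [w wA] : exists w : 'rV[F]_n, ~~ (w <= A)%MS.
  apply: NNPP => allA; apply: nsurj => w; apply: NNPP => nopre; case: allA.
  by exists w; apply/negP => /submxP[D wD]; apply: nopre; exists D.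
have [l lA wl] := separating_functional wA; exists l.
  by apply: contra_eq_neq wl => ->; rewrite trmx0 mulmx0 eq_sym oner_neq0.
by apply: trmx_inj; rewrite trmx_mul trmxK trmx0; apply/eqP; rewrite -sub_annmx.
Qed.

Lemma lin_injective0 m n (A : 'M[F]_(m, n)) : m = 0%N -> lin_injective A.
Proof. by move=> m0; subst m => x y _; apply/matrixP => ? []. Qed.

Lemma lin_surjective0 m n (A : 'M[F]_(m, n)) : n = 0%N -> lin_surjective A.
Proof. by move=> n0; subst n => w; exists 0; apply/matrixP => ? []. Qed.

End LinearMaps.

Lemma zz_vanish_above (F : fieldType) (V : zzmod F) i : zzindecomposable V -> zeven i ->
  ~ (lin_injective (zf V i) /\ lin_surjective (zg V i)) ->
  forall n, i < n -> zdim V n = 0%N.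
Proof.
move=> hV ev bad; case: (classic (lin_injective (zf V i))) => [inj|/lin_injectivePn[x x0 xf]].
  have /lin_surjectivePn[l l0 gl] : ~ lin_surjective (zg V i) by move=> surj; case: bad.
  have [v [u [u0 vu th]]] := idem_thread_through_dual (rarrows V (i - 1)) l0.
  move=> n ltin; apply: (rtail_vanish th hV vu); last by lia.
    by rewrite zeven_subr1 ev.
  move=> c _ /addIr ->; rewrite (rtail_idem_rpos v u 0) /thread_mx u0.
  by rewrite mulmxA gl mul0mx.
have [v [u [v0 vu th]]] := idem_thread_through (rarrows V i) x0.
apply: (rtail_vanish th hV vu).
  by move=> _; rewrite (rtail_idem_rpos v u 0) /thread_mx -mulmxA v0 xf mulmx0.
by move=> c evc ci; move: evc; rewrite -(subrK 1 c) ci zeven_addr1 ev.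
Qed.

Lemma zz_vanish_below (F : fieldType) (V : zzmod F) i : zzindecomposable V -> zeven i ->
  ~ (lin_surjective (zf V i) /\ lin_injective (zg V i)) ->
  forall n, n < i -> zdim V n = 0%N.
Proof.
move=> hV ev bad; case: (classic (lin_injective (zg V i))) => [inj|/lin_injectivePn[x x0 xg]].
  have /lin_surjectivePn[l l0 fl] : ~ lin_surjective (zf V i) by move=> surj; case: bad.
  have [v [u [u0 vu th]]] := idem_thread_through_dual (larrows V (i + 1)) l0.
  move=> n ltni; apply: (ltail_vanish th hV vu); last by lia.
    by rewrite zeven_addr1 ev.
  move=> c _ /addIr ->; rewrite (ltail_idem_lpos v u 0) /thread_mx u0.
  by rewrite mulmxA fl mul0mx.
have [v [u [v0 vu th]]] := idem_thread_through (larrows V i) x0.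
apply: (ltail_vanish th hV vu).
  by move=> _; rewrite (ltail_idem_lpos v u 0) /thread_mx -mulmxA v0 xg mulmx0.
by move=> c evc ci; move: evc; rewrite -(addrK 1 c) ci zeven_subr1 ev.
Qed.

Lemma zz_tail_right (F : fieldType) (V : zzmod F) : zzindecomposable V ->
  exists t : int, 0 <= t /\ forall i, zeven i -> t <= i ->
    lin_injective (zf V i) /\ lin_surjective (zg V i).
Proof.
move=> hV; case: (classic (exists i, [/\ zeven i, 0 <= i &
  ~ (lin_injective (zf V i) /\ lin_surjective (zg V i))])) => [[i [ev i0 bad]]|good].
  have V0 := zz_vanish_above hV ev bad.
  exists (i + 2); split=> [|n _ le]; first lia.
  by split; [apply: lin_injective0 | apply: lin_surjective0]; apply: V0; lia.
exists 0; split=> // i ev i0; apply: NNPP => bad; by case: good; exists i.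
Qed.

Lemma zz_tail_left (F : fieldType) (V : zzmod F) : zzindecomposable V ->
  exists s : int, s <= 0 /\ forall i, zeven i -> i <= s ->
    lin_surjective (zf V i) /\ lin_injective (zg V i).
Proof.
move=> hV; case: (classic (exists i, [/\ zeven i, i <= 0 &
  ~ (lin_surjective (zf V i) /\ lin_injective (zg V i))])) => [[i [ev i0 bad]]|good].
  have V0 := zz_vanish_below hV ev bad.
  exists (i - 2); split=> [|n _ le]; first lia.
  by split; [apply: lin_surjective0 | apply: lin_injective0]; apply: V0; lia.
exists 0; split=> // i ev i0; apply: NNPP => bad; by case: good; exists i.
Qed.

Theorem lemma3 (F : fieldType) (V : zzmod F) (hV : zzindecomposable V) :
  (exists t : int, 0 <= t /\
     forall i : int, zeven i -> t <= i ->
       lin_injective (zf V i) /\ lin_surjective (zg V i)) /\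
  (exists s : int, s <= 0 /\
     forall i : int, zeven i -> i <= s ->
       lin_surjective (zf V i) /\ lin_injective (zg V i)).
Proof. by split; [exact: zz_tail_right | exact: zz_tail_left]. Qed.
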